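(* Let $a\geq 3$ be an odd integer, let $\alpha\in B_a$, let $n\geq 1$ be an integer, and let $r$ be an odd positive integer with $r\leq 2a^n$. Then the line $y=\alpha\left(x-\frac{r}{2a^n}\right)$ in $\mathbb{R}^2$ contains no point of the form $\left(\frac{u}{a^l},\frac{v}{a^m}\right)$ with $u,v,l,m\in\mathbb{Z}$.
   Context: For an odd integer $a\geq 3$, $$B_a=\left\{\frac{p}{q}\ :\ p+q\leq a-1,\ 0\leq p\leq q\leq a-2,\ p,q\in\mathbb{N},\ p\text{ and }q\text{ odd}\right\},$$ where $\mathbb{N}=\{1,2,3,\dots\}$. *)

From mathcomp Require Import all_boot all_order all_algebra.
Set Implicit Arguments. Unset Strict Implicit. Unset Printing Implicit Defensive.
Import Order.TTheory GRing.Theory Num.Theory.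
Local Open Scope ring_scope.

Definition in_B (R : realFieldType) (a : nat) (alpha : R) : Prop :=
  exists p q : nat,
    [/\ (0 < p)%N, (0 < q)%N, odd p & odd q] /\
    [/\ (p + q <= a - 1)%N, (p <= q)%N & (q <= a - 2)%N] /\
    alpha = p%:R / q%:R.

(* Clearing denominators with a common power a^N turns the equation of the
   line into 2 q v a^k1 = p (2 u a^k2 - r a^k3) in the integers, where
   alpha = p/q.  The left side is even, while the right side is p times an
   odd number, since p, r and a are odd. *)

From mathcomp Require Import all_boot all_order all_algebra.
From mathcomp Require Import zify ring.
Import Order.TTheory GRing.Theory Num.Theory.
Local Open Scope ring_scope.

Lemma expfz_mul_exprn (R : fieldType) (A : R) (m : int) (N : nat) :
  A != 0 -> m <= N%:Z -> exists k : nat, A ^ m * A ^+ k = A ^+ N.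
Proof.
move=> A0 le_mN; exists `|N%:Z - m|%N.
have e : (`|N%:Z - m|%N : int) = N%:Z - m by rewrite gez0_abs // subr_ge0.
by rewrite !exprnP e -expfzDr // addrC subrK.
Qed.

Lemma double_neq_odd_mul_double_sub_odd (x y : int) {c o : nat} :
  odd c -> odd o -> 2 * x != c%:Z * (2 * y - o%:Z).
Proof.
move=> oc oo; apply/eqP => E.
have := odd_double_half c; have := odd_double_half o; rewrite oc oo.
move: E; nia.
Qed.

Section ClearDenominators.

Context {R : numFieldType} {a p q n r : nat} {u v l m : int}.
Hypotheses (a_gt0 : (0 < a)%N) (q_gt0 : (0 < q)%N).

Lemma line_eq_int_cleared :
  (v%:~R / (a%:R ^ m) : R) =
    p%:R / q%:R * (u%:~R / (a%:R ^ l) - r%:R / (2 * a%:R ^+ n)) ->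
  exists k1 k2 k3 : nat,
    2 * q%:Z * v * (a ^ k1)%N = p%:Z * (2 * u * (a ^ k2)%N - r%:Z * (a ^ k3)%N).
Proof.
move=> E; set A : R := a%:R in E.
have A0 : A != 0 by rewrite /A pnatr_eq0 -lt0n.
have q0 : (q%:R : R) != 0 by rewrite pnatr_eq0 -lt0n.
have [Am0 Al0 An0] : [/\ A ^ m != 0, A ^ l != 0 & A ^+ n != 0].
  by split; [apply: expfz_neq0 | apply: expfz_neq0 | apply: expf_neq0].
pose N : nat := (`|m| + `|l| + n)%N.
have [k1 h1] : exists k, A ^ m * A ^+ k = A ^+ N.
  by apply: expfz_mul_exprn => //; have := lez_abs m; rewrite /N; lia.
have [k2 h2] : exists k, A ^ l * A ^+ k = A ^+ N.
  by apply: expfz_mul_exprn => //; have := lez_abs l; rewrite /N; lia.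
have [k3 h3] : exists k, A ^ n * A ^+ k = A ^+ N.
  by apply: expfz_mul_exprn => //; rewrite /N; lia.
rewrite -exprnP in h3.
have e1 : v%:~R * A ^+ k1 = v%:~R / A ^ m * A ^+ N by rewrite -h1; field.
have e2 : u%:~R * A ^+ k2 = u%:~R / A ^ l * A ^+ N by rewrite -h2; field.
have e3 : r%:R * A ^+ k3 = r%:R / (2 * A ^+ n) * (2 * A ^+ N) by rewrite -h3; field.
have ER : 2 * q%:R * v%:~R * A ^+ k1 = p%:R * (2 * u%:~R * A ^+ k2 - r%:R * A ^+ k3).
  rewrite -[_ * v%:~R * _]mulrA e1 -[2 * u%:~R * _]mulrA e2 e3 E.
  by field; rewrite An0 Al0 q0.
exists k1, k2, k3; apply: (@intr_inj R).
by rewrite !(rmorphM, rmorphB) /=; move: ER; rewrite /A -!natrX.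
Qed.

End ClearDenominators.

Theorem lemma3p2 (R : realFieldType) (a : nat) (alpha : R) (n r : nat) :
  (3 <= a)%N -> odd a -> in_B a alpha ->
  (1 <= n)%N -> odd r -> (0 < r)%N -> (r <= 2 * a ^ n)%N ->
  ~ exists (u v l m : int),
      (v%:~R / (a%:R ^ m) : R) =
        alpha * (u%:~R / (a%:R ^ l) - r%:R / (2 * a%:R ^+ n)).
Proof.
move=> a3 oa [p [q [[_ q0 op _] [_ ->]]]] _ or _ _ [u [v [l [m E]]]].
have a0 : (0 < a)%N by apply: leq_trans a3.
have [k1 [k2 [k3 Eint]]] := line_eq_int_cleared a0 q0 E.
have odd_ra : odd (r * a ^ k3) by rewrite oddM or oddX oa orbT.
have := double_neq_odd_mul_double_sub_odd (q%:Z * v * (a ^ k1)%N)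
  (u * (a ^ k2)%N) op odd_ra.
by rewrite PoszM !mulrA Eint eqxx.
Qed.
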